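(* Let $a,b\ge1$ and let $X(a,b)$ be the digraph with vertex set $\{x_1,\dots,x_a\}\cup\{y_1,\dots,y_a\}\cup\{z_1,\dots,z_b\}$ and arc set $\{x_jy_j,\,y_jx_j: 1\le j\le a\}\cup\{x_jz_\ell,\, z_\ell y_j: 1\le j\le a,\ 1\le \ell\le b\}$. Then the eigenvalues of $H(X(a,b))$ are $$\frac{-1+\sqrt{1+8ab}}{2},\quad 1^{(a)},\quad 0^{(b-1)},\quad (-1)^{(a-1)},\quad \frac{-1-\sqrt{1+8ab}}{2},$$ where superscripts denote multiplicities.
   Context: For a digraph $X$ (finite vertex set, arcs are ordered pairs of distinct vertices), the Hermitian adjacency matrix $H(X)$ has $(u,v)$-entry $1$ if $uv$ and $vu$ are arcs, $i$ if only $uv$ is an arc, $-i$ if only $vu$ is an arc, and $0$ otherwise. *)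

From HB Require Import structures.
From mathcomp Require Import all_boot all_order all_algebra all_field.
Set Implicit Arguments. Unset Strict Implicit. Unset Printing Implicit Defensive.
Import Order.TTheory GRing.Theory Num.Theory.
Local Open Scope ring_scope.

Definition herm_adj (T : finType) (arc : rel T) : 'M[algC]_#|T| :=
  \matrix_(i, j)
    let u := enum_val i in let v := enum_val j in
    if arc u v && arc v u then 1
    else if arc u v then 'i
    else if arc v u then - 'i
    else 0.

(* Vertex type of X(a,b): inl (inl j) = x_j, inl (inr j) = y_j, inr l = z_l. *)
Definition Xab_vert (a b : nat) : finType := ('I_a + 'I_a + 'I_b)%type.

Definition Xab_arc (a b : nat) : rel (Xab_vert a b) :=
  fun u v =>
    match u, v with
    | inl (inl j), inl (inr j') => j == j'
    | inl (inr j), inl (inl j') => j == j'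
    | inl (inl _), inr _ => true
    | inr _, inl (inr _) => true
    | _, _ => false
    end.

From HB Require Import structures.
From mathcomp Require Import all_boot all_order all_algebra all_field.
From mathcomp Require Import ring.
Set Implicit Arguments. Unset Strict Implicit. Unset Printing Implicit Defensive.
Import Order.TTheory GRing.Theory Num.Theory.
Local Open Scope ring_scope.

(* With lambda_{+-} the roots of X^2 + X - 2ab, H(X(a,b)) has the row
   eigenvectors x_j + y_j (eigenvalue 1), (x_j - y_j) - (x_j0 - y_j0)
   (eigenvalue -1), z_l - z_l0 (eigenvalue 0) and, for both roots, the vector
   equal to lambda on every x_j, to -lambda on every y_j and to 2ia on every z_l
   (eigenvalue lambda).  As the roots differ, these a + (a - 1) + (b - 1) + 2
   vectors are linearly independent, so they form an eigenbasis and the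
   characteristic polynomial is the product of the X - eigenvalue. *)

Lemma char_poly_conj_diag (R : idomainType) n (P A : 'M[R]_n) (d : 'rV[R]_n) :
  \det P != 0 -> P *m A = diag_mx d *m P ->
  char_poly A = \prod_(i < n) ('X - (d 0 i)%:P).
Proof.
move=> detP PA.
have conj_char : map_mx polyC P *m char_poly_mx A
               = char_poly_mx (diag_mx d) *m map_mx polyC P.
  rewrite /char_poly_mx mulmxBr mulmxBl mul_mx_scalar mul_scalar_mx.
  by rewrite -!map_mxM PA.
move/(congr1 determinant): conj_char.
rewrite !det_mulmx -!/(char_poly _) mulrC => /mulIf ->.
  rewrite char_poly_trig ?diag_mx_is_trig //.
  by apply: eq_bigr => i _; rewrite mxE eqxx.
by rewrite det_map_mx polyC_eq0.
Qed.

Lemma char_poly_eigenbasis (R : fieldType) (T : finType) (M p : T -> T -> R)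
    (d : T -> R) :
  (forall c t, \sum_s p c s * M s t = d c * p c t) ->
  (forall w : T -> R, (forall t, \sum_c w c * p c t = 0) -> forall c, w c = 0) ->
  char_poly (\matrix_(i, j) M (enum_val i) (enum_val j) : 'M_#|T|)
    = \prod_c ('X - (d c)%:P).
Proof.
move=> eigen indep.
pose P : 'M[R]_#|T| := \matrix_(i, j) p (enum_val i) (enum_val j).
pose D : 'rV[R]_#|T| := \row_i d (enum_val i).
have PM : P *m (\matrix_(i, j) M (enum_val i) (enum_val j) : 'M_#|T|)
           = diag_mx D *m P.
  apply/matrixP => i j; rewrite mul_diag_mx !mxE -eigen (big_enum_val (A := T)).
  by apply: eq_bigr => k _; rewrite !mxE.
have detP : \det P != 0.
  apply/det0P => -[v /negP v_neq0 vP]; apply: v_neq0; apply/eqP/rowP => i.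
  rewrite mxE -[i]enum_valK; apply: (indep (fun c => v 0 (enum_rank c))) => t.
  move/rowP/(_ (enum_rank t)): vP; rewrite !mxE => vPt.
  rewrite -[RHS]vPt (big_enum_val (A := T)); apply: eq_bigr => k _.
  by rewrite !mxE enum_rankK enum_valK.
rewrite (char_poly_conj_diag detP PM) (big_enum_val (A := T)).
by apply: eq_bigr => i _; rewrite mxE.
Qed.

Lemma sum_delta (R : pzSemiRingType) (I : finType) (k : I) (F : I -> R) :
  \sum_j F j * (j == k)%:R = F k.
Proof.
by rewrite (bigD1 k) //= eqxx mulr1 big1 ?addr0 // => j /negPf->; rewrite mulr0.
Qed.

Lemma sum_delta1 (R : pzSemiRingType) (I : finType) (k : I) :
  \sum_j (k == j)%:R = 1 :> R.
Proof.
by rewrite -[RHS](sum_delta k (fun=> 1)); apply: eq_bigr => j; rewrite mul1r eq_sym.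
Qed.

Lemma prodr_const_but1 (R : comPzSemiRingType) (I : finType) (i0 : I) (F : I -> R) y :
  (forall i, i != i0 -> F i = y) -> \prod_i F i = F i0 * y ^+ #|I|.-1.
Proof.
move=> Fy; rewrite (bigD1 i0) //= (eq_bigr _ Fy) prodr_const -(cardC1 i0).
by congr (_ * _ ^+ _); apply: eq_card.
Qed.

Lemma addr_subr_eq0 (R : numDomainType) (x d : R) :
  x + d = 0 -> x - d = 0 -> x = 0 /\ d = 0.
Proof.
move=> sum0 diff0; have d0 : d = 0.
  have : d *+ 2 = 0 by rewrite -[RHS](subrr 0) -{1}sum0 -diff0; ring.
  by move/eqP; rewrite mulrn_eq0 => /eqP.
by move: sum0; rewrite d0 addr0.
Qed.

Lemma centered_eq0 (R : numDomainType) (I : finType) (i0 : I) (c : R) (u : I -> R) :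
  (forall k, c + (u k - (i0 == k)%:R * \sum_j u j) = 0) ->
  c = 0 /\ forall k, k != i0 -> u k = 0.
Proof.
move=> eq0.
have c0 : c = 0.
  have : \sum_k (c + (u k - (i0 == k)%:R * \sum_j u j)) = c *+ #|I|.
    by rewrite big_split sumrB /= sumr_const -mulr_suml sum_delta1 mul1r subrr addr0.
  have /lt0n_neq0/negPf I_neq0 : (0 < #|I|)%N by apply/card_gt0P; exists i0.
  by rewrite big1 // => /esym/eqP; rewrite mulrn_eq0 I_neq0 => /eqP.
split=> // k; rewrite eq_sym => /negPf ki0.
by move: (eq0 k); rewrite c0 ki0 mul0r subr0 add0r.
Qed.

Section Xab.
Variables (a b : nat).
Local Notation T := (Xab_vert a b).

Definition Xab_herm (s t : T) : algC :=
  match s, t with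
  | inl (inl k), inl (inr j) | inl (inr k), inl (inl j) => (k == j)%:R
  | inl (inl _), inr _ | inr _, inl (inr _) => 'i
  | inr _, inl (inl _) | inl (inr _), inr _ => - 'i
  | _, _ => 0
  end.

Lemma herm_adj_XabE :
  herm_adj (@Xab_arc a b) = \matrix_(i, j) Xab_herm (enum_val i) (enum_val j).
Proof.
apply/matrixP => i j; rewrite !mxE.
by case: (enum_val i) => [[k|k]|k]; case: (enum_val j) => [[m|m]|m] //=;
  rewrite ?(eq_sym m k); case: eqP.
Qed.

Section RowTimesHerm.
Variable v : T -> algC.

Lemma Xab_herm_mul_x k :
  \sum_s v s * Xab_herm s (inl (inl k)) = v (inl (inr k)) - 'i * \sum_l v (inr l).
Proof.
rewrite !big_sumType /= big1 ?add0r; last by move=> j _; rewrite mulr0.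
by rewrite sum_delta mulr_sumr -sumrN;
  congr (_ + _); apply: eq_bigr => l _; rewrite mulrN mulrC.
Qed.

Lemma Xab_herm_mul_y k :
  \sum_s v s * Xab_herm s (inl (inr k)) = v (inl (inl k)) + 'i * \sum_l v (inr l).
Proof.
rewrite !big_sumType /= [X in _ + X + _]big1 ?addr0; last by move=> j _; rewrite mulr0.
by rewrite sum_delta mulr_sumr;
  congr (_ + _); apply: eq_bigr => l _; rewrite mulrC.
Qed.

Lemma Xab_herm_mul_z l :
  \sum_s v s * Xab_herm s (inr l)
    = 'i * \sum_j v (inl (inl j)) - 'i * \sum_j v (inl (inr j)).
Proof.
rewrite !big_sumType /= [X in _ + X]big1 ?addr0; last by move=> m _; rewrite mulr0.
by rewrite !mulr_sumr -sumrN; congr (_ + _); apply: eq_bigr => j _;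
  rewrite ?mulrN mulrC.
Qed.

End RowTimesHerm.

Definition xy_sum (j : 'I_a) (s : T) : algC :=
  match s with inl (inl k) | inl (inr k) => (j == k)%:R | inr _ => 0 end.

Definition xy_diff (j j' : 'I_a) (s : T) : algC :=
  match s with
  | inl (inl k) => (j == k)%:R - (j' == k)%:R
  | inl (inr k) => (j' == k)%:R - (j == k)%:R
  | inr _ => 0
  end.

Definition z_diff (l l' : 'I_b) (s : T) : algC :=
  match s with inr m => (l == m)%:R - (l' == m)%:R | inl _ => 0 end.

Definition xyz_vec (lambda : algC) (s : T) : algC :=
  match s with
  | inl (inl _) => lambda
  | inl (inr _) => - lambda
  | inr _ => 2 * 'i * a%:R
  end.

Ltac herm_mul := case=> [[k|k]|k];
  rewrite ?Xab_herm_mul_x ?Xab_herm_mul_y ?Xab_herm_mul_z /=.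

Lemma xy_sum_eigen j t : \sum_s xy_sum j s * Xab_herm s t = 1 * xy_sum j t.
Proof.
by move: t; herm_mul; rewrite ?big1_eq ?mulr0 ?subr0 ?addr0 ?mul1r ?subrr.
Qed.

Lemma xy_diff_eigen j j' t : \sum_s xy_diff j j' s * Xab_herm s t = -1 * xy_diff j j' t.
Proof.
by move: t; herm_mul;
  rewrite ?big1_eq ?sumrB ?sum_delta1 ?subrr ?mulr0 ?subr0 ?addr0 ?mulN1r ?opprB.
Qed.

Lemma z_diff_eigen l l' t : \sum_s z_diff l l' s * Xab_herm s t = 0 * z_diff l l' t.
Proof.
by move: t; herm_mul;
  rewrite ?big1_eq ?sumrB ?sum_delta1 ?subrr ?mulr0 ?mul0r ?subrr ?addr0.
Qed.

Lemma xyz_vec_eigen (lambda : algC) t : lambda ^+ 2 + lambda = 2 * (a * b)%:R ->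
  \sum_s xyz_vec lambda s * Xab_herm s t = lambda * xyz_vec lambda t.
Proof.
move=> /(canRL (addrK lambda)); rewrite natrM => root.
have i2 : 'i ^+ 2 = -1 :> algC by rewrite sqrCi.
by move: t; herm_mul; rewrite !sumr_const !card_ord; ring: root i2.
Qed.

Section Eigenbasis.
Variables (j0 : 'I_a) (l0 : 'I_b) (lp lm : algC).

(* The Kronecker factors, instead of a case split on [j == j0], let linear
   combinations of the rows be summed termwise (see [Xab_eigvec_comb_x]). *)
Definition Xab_eigvec (c s : T) : algC :=
  match c with
  | inl (inl j) => xy_sum j s
  | inl (inr j) => xyz_vec lp s * (j == j0)%:R + xy_diff j j0 s
  | inr l => xyz_vec lm s * (l == l0)%:R + z_diff l l0 s
  end.

Definition Xab_eigval (c : T) : algC :=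
  match c with
  | inl (inl _) => 1
  | inl (inr j) => if j == j0 then lp else -1
  | inr l => if l == l0 then lm else 0
  end.

Lemma Xab_eigvec_y j s :
  Xab_eigvec (inl (inr j)) s = if j == j0 then xyz_vec lp s else xy_diff j j0 s.
Proof.
rewrite /=; case: eqP => [->|_]; last by rewrite mulr0 add0r.
by case: s => [[k|k]|k] /=; rewrite mulr1 ?subrr addr0.
Qed.

Lemma Xab_eigvec_z l s :
  Xab_eigvec (inr l) s = if l == l0 then xyz_vec lm s else z_diff l l0 s.
Proof.
rewrite /=; case: eqP => [->|_]; last by rewrite mulr0 add0r.
by case: s => [[k|k]|k] /=; rewrite mulr1 ?subrr addr0.
Qed.

Section Combination.
Variable w : T -> algC.
Local Notation wx j := (w (inl (inl j))).
Local Notation wy j := (w (inl (inr j))).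
Local Notation wz l := (w (inr l)).

Lemma Xab_eigvec_comb_x k :
  \sum_c w c * Xab_eigvec c (inl (inl k))
    = wx k + (lp * wy j0 + lm * wz l0 + (wy k - (j0 == k)%:R * \sum_j wy j)).
Proof.
rewrite !big_sumType /= sum_delta.
under eq_bigr do rewrite mulrDr mulrBr mulrCA.
under [X in _ + X]eq_bigr do rewrite addr0 mulrCA.
rewrite big_split sumrB /= -!mulr_sumr !sum_delta -mulr_suml; ring.
Qed.

Lemma Xab_eigvec_comb_y k :
  \sum_c w c * Xab_eigvec c (inl (inr k))
    = wx k - (lp * wy j0 + lm * wz l0 + (wy k - (j0 == k)%:R * \sum_j wy j)).
Proof.
rewrite !big_sumType /= sum_delta.
under eq_bigr do rewrite mulrDr mulrBr mulrCA.
under [X in _ + X]eq_bigr do rewrite addr0 mulrCA.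
rewrite big_split sumrB /= -!mulr_sumr !sum_delta -mulr_suml; ring.
Qed.

Lemma Xab_eigvec_comb_z m :
  \sum_c w c * Xab_eigvec c (inr m)
    = 2 * 'i * a%:R * (wy j0 + wz l0) + (wz m - (l0 == m)%:R * \sum_l wz l).
Proof.
rewrite !big_sumType /=.
under eq_bigr do rewrite mulr0.
under [X in _ + X + _]eq_bigr do rewrite addr0 mulrCA.
under [X in _ + X]eq_bigr do rewrite mulrDr mulrBr mulrCA.
rewrite big1_eq big_split sumrB /= -!mulr_sumr !sum_delta -mulr_suml; ring.
Qed.

End Combination.

Lemma Xab_eigvec_free : lp != lm -> forall w : T -> algC,
  (forall t, \sum_c w c * Xab_eigvec c t = 0) -> forall c, w c = 0.
Proof.
move=> lp_neq_lm w comb0.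
have x_y_eq0 k : w (inl (inl k)) = 0 /\
    lp * w (inl (inr j0)) + lm * w (inr l0)
      + (w (inl (inr k)) - (j0 == k)%:R * \sum_j w (inl (inr j))) = 0.
  apply: addr_subr_eq0.
    by rewrite -Xab_eigvec_comb_x comb0.
  by rewrite -Xab_eigvec_comb_y comb0.
have [y0_comb y0] := centered_eq0 (fun k => (x_y_eq0 k).2).
have [z0_comb z0] :=
  centered_eq0 (fun m => etrans (esym (Xab_eigvec_comb_z w m)) (comb0 _)).
have yz0 : w (inl (inr j0)) + w (inr l0) = 0.
  have a_gt0 : (0 < a)%N := leq_ltn_trans (leq0n j0) (ltn_ord j0).
  have /negPf ia_neq0 : 2 * 'i * a%:R != 0 :> algC.
    by rewrite !mulf_neq0 ?neq0Ci // pnatr_eq0 -lt0n.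
  by move/eqP: z0_comb; rewrite mulf_eq0 ia_neq0 => /eqP.
have wy0 : w (inl (inr j0)) = 0.
  have : (lp - lm) * w (inl (inr j0))
         = lp * w (inl (inr j0)) + lm * w (inr l0) - lm * (w (inl (inr j0)) + w (inr l0)).
    by ring.
  rewrite y0_comb yz0 mulr0 subr0 => /eqP.
  by rewrite mulf_eq0 subr_eq0 (negPf lp_neq_lm) => /eqP.
case=> [[j|j]|l]; first exact: (x_y_eq0 j).1.
  by have [->|/y0] := eqVneq j j0.
have [->|/z0 //] := eqVneq l l0.
by move: yz0; rewrite wy0 add0r.
Qed.

Lemma prod_Xab_eigval :
  \prod_c ('X - (Xab_eigval c)%:P)
    = ('X - 1) ^+ a * (('X - lp%:P) * ('X + 1) ^+ (a - 1))
      * (('X - lm%:P) * 'X ^+ (b - 1)).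
Proof.
rewrite !big_sumType /= polyC1 prodr_const card_ord.
rewrite (prodr_const_but1 (i0 := j0) (y := 'X + 1)); last first.
  by move=> j /negPf->; rewrite polyCN opprK.
rewrite (prodr_const_but1 (i0 := l0) (y := 'X)); last by move=> l /negPf->; rewrite subr0.
by rewrite !eqxx !card_ord !subn1.
Qed.

Hypotheses (lp_root : lp ^+ 2 + lp = 2 * (a * b)%:R)
           (lm_root : lm ^+ 2 + lm = 2 * (a * b)%:R).

Lemma Xab_eigvec_eigen c t :
  \sum_s Xab_eigvec c s * Xab_herm s t = Xab_eigval c * Xab_eigvec c t.
Proof.
case: c => [[j|j]|l]; first exact: xy_sum_eigen.
- under eq_bigr do rewrite Xab_eigvec_y; rewrite Xab_eigvec_y /=.
  by case: eqP => _; [exact: xyz_vec_eigen | exact: xy_diff_eigen].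
- under eq_bigr do rewrite Xab_eigvec_z; rewrite Xab_eigvec_z /=.
  by case: eqP => _; [exact: xyz_vec_eigen | exact: z_diff_eigen].
Qed.

End Eigenbasis.
End Xab.

Theorem lemma5p3 (a b : nat) (ha : (1 <= a)%N) (hb : (1 <= b)%N) :
  char_poly (herm_adj (@Xab_arc a b)) =
    ('X - ((-1 + sqrtC (1 + 8 * (a * b)%:R)) / 2)%:P)
    * ('X - 1) ^+ a
    * 'X ^+ (b - 1)
    * ('X + 1) ^+ (a - 1)
    * ('X - ((-1 - sqrtC (1 + 8 * (a * b)%:R)) / 2)%:P).
Proof.
set s := sqrtC _; set lp := (-1 + s) / 2; set lm := (-1 - s) / 2.
have s2 : s ^+ 2 = 1 + 8 * (a * b)%:R by rewrite sqrtCK.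
have lp_root : lp ^+ 2 + lp = 2 * (a * b)%:R by rewrite /lp; field: s2.
have lm_root : lm ^+ 2 + lm = 2 * (a * b)%:R by rewrite /lm; field: s2.
have lp_neq_lm : lp != lm.
  rewrite -subr_eq0 (_ : lp - lm = s); last by rewrite /lp /lm; field.
  apply: contra_eq_neq s2 => ->.
  by rewrite expr0n eq_sym paddr_eq0 ?oner_eq0 ?mulr_ge0 ?ler0n.
pose j0 : 'I_a := Ordinal ha; pose l0 : 'I_b := Ordinal hb.
rewrite herm_adj_XabE (char_poly_eigenbasis (Xab_eigvec_eigen j0 l0 lp_root lm_root)
  (Xab_eigvec_free (j0 := j0) (l0 := l0) lp_neq_lm)) prod_Xab_eigval.
by ring.
Qed.
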